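(* Let $a\in\omega\setminus\{0\}$ and $h(n)=2^{(a^n)}$. Then $\mathrm{IOE}(h)\ge_S\mathcal D(1/a)$ and $\mathrm{AED}(h)\le_S\mathcal B(1/a)$.
   Context: A mass problem is a nonempty set of functions $\omega\to\omega$. $\mathcal B\le_S\mathcal C$ (equivalently $\mathcal C\ge_S\mathcal B$) means there is a Turing functional $\Phi$ with $\Phi^g\in\mathcal B$ for all $g\in\mathcal C$. For bit sequences $x,y$, $x\leftrightarrow y=\{n:x(n)=y(n)\}$; for $Z\subseteq\omega$, $\underline\rho(Z)=\liminf_n|Z\cap[0,n)|/n$. $\mathcal D(p)$ is the set of bit sequences $y$ with $\underline\rho(x\leftrightarrow y)\le p$ for every computable bit sequence $x$; $\mathcal B(p)$ is the set of bit sequences $y$ with $\underline\rho(x\leftrightarrow y)>p$ for every computable bit sequence $x$. $\mathrm{IOE}(h)$ is the set of functions $y:\omega\to\omega$ such that every computable $x$ with $x(n)<h(n)$ for all $n$ satisfies $x(n)=y(n)$ for infinitely many $n$; $\mathrm{AED}(h)$ is the set of functions $y$ with $y(n)<h(n)$ for all $n$ such that every computable $x$ satisfies $x(n)\neq y(n)$ for all but finitely many $n$. *)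

From HB Require Import structures.
From mathcomp Require Import all_boot all_order all_algebra.
From mathcomp Require Import all_classical all_reals.
From mathcomp Require Import topology normedtype sequences.
From mathcomp Require Import Rstruct Rstruct_topology.
From Stdlib Require Import Cantor.
Set Implicit Arguments. Unset Strict Implicit. Unset Printing Implicit Defensive.
Import Order.TTheory GRing.Theory Num.Theory.

(* Oracle (relative) partial recursive functionals, in the standard    *)

Definition pairn (x y : nat) : nat := Cantor.to_nat (x, y).
Definition fstn (n : nat) : nat := (Cantor.of_nat n).1.
Definition sndn (n : nat) : nat := (Cantor.of_nat n).2.

Inductive code : Type :=
| CZero
| CSucc
| CId
| CFst
| CSnd
| COracle
| CComp (f h : code)
| CPair (f h : code)
| CRec (f h : code)
| CMu (f : code).

Inductive eval (g : nat -> nat) : code -> nat -> nat -> Prop :=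
| ev_zero x : eval g CZero x 0
| ev_succ x : eval g CSucc x x.+1
| ev_id x : eval g CId x x
| ev_fst x : eval g CFst x (fstn x)
| ev_snd x : eval g CSnd x (sndn x)
| ev_oracle x : eval g COracle x (g x)
| ev_comp f h x y z : eval g h x y -> eval g f y z -> eval g (CComp f h) x z
| ev_pair f h x y z : eval g f x y -> eval g h x z -> eval g (CPair f h) x (pairn y z)
| ev_rec0 f h x y : eval g f x y -> eval g (CRec f h) (pairn x 0) y
| ev_recS f h x n r y : eval g (CRec f h) (pairn x n) r ->
    eval g h (pairn x (pairn n r)) y -> eval g (CRec f h) (pairn x n.+1) y
| ev_mu f x n :
    eval g f (pairn x n) 0 ->
    (forall m, m < n -> exists k, eval g f (pairn x m) k.+1) ->
    eval g (CMu f) x n.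

Definition tf_apply (c : code) (g : nat -> nat) (y : nat -> nat) : Prop :=
  forall n, eval g c n (y n).

Definition mass := (nat -> nat) -> Prop.

Definition strong_le (B C : mass) : Prop :=
  exists c : code, forall g, C g -> exists y, tf_apply c g y /\ B y.

(* computable total functions: computed by some functional (oracle irrelevant,
   fixed to the constant-0 oracle). *)
Definition computable (x : nat -> nat) : Prop :=
  exists c : code, tf_apply c (fun _ => 0) x.

Definition bitseq_fun (x : nat -> nat) : Prop := forall n, x n < 2.

Definition agree (x y : nat -> nat) : nat -> bool := fun n => x n == y n.

Local Open Scope ring_scope.
Definition lower_density (Z : nat -> bool) : \bar Rdefinitions.R :=
  limn_einf (fun n : nat => ((count Z (iota 0 n))%:R / n%:R : Rdefinitions.R)%:E).

Definition massD (p : Rdefinitions.R) : mass := fun y =>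
  bitseq_fun y /\
  forall x, computable x -> bitseq_fun x -> (lower_density (agree x y) <= p%:E)%E.

Definition massB (p : Rdefinitions.R) : mass := fun y =>
  bitseq_fun y /\
  forall x, computable x -> bitseq_fun x -> (p%:E < lower_density (agree x y))%E.
Local Close Scope ring_scope.

Definition IOE (h : nat -> nat) : mass := fun y =>
  forall x, computable x -> (forall n, x n < h n) ->
    forall N, exists n, N <= n /\ x n = y n.

Definition AED (h : nat -> nat) : mass := fun y =>
  (forall n, y n < h n) /\
  forall x, computable x -> exists N, forall n, N <= n -> x n <> y n.

From Pilot Require Import Defs.
From HB Require Import structures.
From mathcomp Require Import all_boot all_order all_algebra.
From mathcomp Require Import all_classical all_reals.
From mathcomp Require Import ereal topology normedtype sequences.
From mathcomp Require Import Rstruct Rstruct_topology.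
From Stdlib Require Import Cantor.
Import Order.TTheory GRing.Theory Num.Theory.

(* Cut omega into consecutive blocks, block n of length a^n starting at
   S_n = 1 + a + ... + a^(n-1).  A value below h(n) = 2^(a^n) is the same as
   a bit string on block n, so a primitive recursive [pack] turns a bit
   sequence z into n |-> (z on block n), and [unpack_compl] turns a function y
   into the bit sequence whose block n is the complement of y(n).  If y(n) is
   z packed on block n, then the unpacked y disagrees with z on all of block n,
   and since S_(n+1) = a S_n + 1, the density of agreements up to S_(n+1) is
   at most S_n / S_(n+1) <= 1/a.  Infinitely many such n thus bound the lower
   density by 1/a; both reductions follow, one directly, the other by
   contraposition. *)

Lemma fstn_pair x y : fstn (pairn x y) = x.
Proof. by rewrite /fstn /pairn Cantor.cancel_of_to. Qed.

Lemma sndn_pair x y : sndn (pairn x y) = y.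
Proof. by rewrite /sndn /pairn Cantor.cancel_of_to. Qed.

Lemma pairn_fst_snd p : pairn (fstn p) (sndn p) = p.
Proof. by rewrite /fstn /sndn /pairn -surjective_pairing Cantor.cancel_to_of. Qed.

(** * Primitive recursive codes *)

Fixpoint prim_rec (b s : nat -> nat) (x n : nat) : nat :=
  if n is n'.+1 then s (pairn x (pairn n' (prim_rec b s x n'))) else b x.

Lemma prim_recS b s x n :
  prim_rec b s x n.+1 = s (pairn x (pairn n (prim_rec b s x n))).
Proof. by []. Qed.

Fixpoint mu_free (c : Defs.code) : bool :=
  match c with
  | CComp f h | CPair f h | CRec f h => mu_free f && mu_free h
  | CMu _ => false
  | _ => true
  end.

(* Meaningful only for [mu_free] codes: the junk value of [CMu] is 0. *)
Fixpoint denote (g : nat -> nat) (c : Defs.code) (x : nat) : nat :=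
  match c with
  | CZero => 0
  | CSucc => x.+1
  | CId => x
  | CFst => fstn x
  | CSnd => sndn x
  | COracle => g x
  | CComp f h => denote g f (denote g h x)
  | CPair f h => pairn (denote g f x) (denote g h x)
  | CRec f h => prim_rec (denote g f) (denote g h) (fstn x) (sndn x)
  | CMu _ => 0
  end.

Fixpoint subst_oracle (c cx : Defs.code) : Defs.code :=
  match c with
  | COracle => cx
  | CComp f h => CComp (subst_oracle f cx) (subst_oracle h cx)
  | CPair f h => CPair (subst_oracle f cx) (subst_oracle h cx)
  | CRec f h => CRec (subst_oracle f cx) (subst_oracle h cx)
  | CMu f => CMu (subst_oracle f cx)
  | c => c
  end.

Lemma subst_oracle_id c : subst_oracle c COracle = c.
Proof. by elim: c => //= [f -> h ->|f -> h ->|f -> h ->|f ->]. Qed.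

Lemma eval_subst_oracle g cx x c v :
  tf_apply cx g x -> mu_free c -> Defs.eval g (subst_oracle c cx) v (denote x c v).
Proof.
move=> hx; elim: c v => //=; try by constructor.
- by move=> f IHf h IHh v /andP[hf hh]; econstructor; eauto.
- by move=> f IHf h IHh v /andP[hf hh]; econstructor; eauto.
move=> f IHf h IHh v /andP[hf hh].
rewrite -{1}(pairn_fst_snd v); elim: (sndn v) => [|n IH] /=.
- by constructor; apply: IHf.
- by econstructor; [exact: IH | apply: IHh].
Qed.

Lemma tf_apply_denote g c : mu_free c -> tf_apply c g (denote g c).
Proof.
move=> hc n; rewrite -{1}[c]subst_oracle_id.
by apply: eval_subst_oracle => // m; constructor.
Qed.

Lemma computable_denote {x c} : computable x -> mu_free c -> computable (denote x c).
Proof. by move=> [cx hx] hc; exists (subst_oracle c cx) => n; apply: eval_subst_oracle. Qed.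

Lemma strong_le_denote {B C : mass} {c} :
  mu_free c -> (forall g, C g -> B (denote g c)) -> strong_le B C.
Proof.
by move=> hc hBC; exists c => g /hBC Bg; exists (denote g c); split; first exact: tf_apply_denote.
Qed.

(* The step function of a recursion receives the triple <x, <n, r>>, where
   r is the value at n. *)
Definition rec_arg := CFst.
Definition rec_idx := CComp CFst CSnd.
Definition rec_val := CComp CSnd CSnd.
Definition crec b s cx cn := CComp (CRec b s) (CPair cx cn).

Section Combinators.
Variable g : nat -> nat.

Lemma denote_comp f h x : denote g (CComp f h) x = denote g f (denote g h x).
Proof. by []. Qed.

Lemma denote_rec_arg x n r : denote g rec_arg (pairn x (pairn n r)) = x.
Proof. by rewrite /rec_arg /= fstn_pair. Qed.

Lemma denote_rec_idx x n r : denote g rec_idx (pairn x (pairn n r)) = n.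
Proof. by rewrite /rec_idx /= sndn_pair fstn_pair. Qed.

Lemma denote_rec_val x n r : denote g rec_val (pairn x (pairn n r)) = r.
Proof. by rewrite /rec_val /= !sndn_pair. Qed.

Lemma denote_crec b s cx cn x :
  denote g (crec b s cx cn) x =
  prim_rec (denote g b) (denote g s) (denote g cx x) (denote g cn x).
Proof. by rewrite /crec /= fstn_pair sndn_pair. Qed.

Fixpoint cconst k := if k is k'.+1 then CComp CSucc (cconst k') else CZero.

Lemma denote_const k x : denote g (cconst k) x = k.
Proof. by elim: k => //= k ->. Qed.

Lemma mu_free_const k : mu_free (cconst k).
Proof. by elim: k. Qed.

Definition cadd c1 c2 := crec CId (CComp CSucc rec_val) c1 c2.
Definition cpred c := crec CZero rec_idx CZero c.
Definition csub c1 c2 := crec CId (cpred rec_val) c1 c2.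
Definition cmul c1 c2 := crec CZero (cadd rec_val rec_arg) c1 c2.
Definition cpow c1 c2 := crec (cconst 1) (cmul rec_val rec_arg) c1 c2.
Definition cleq c1 c2 := csub (cconst 1) (csub c1 c2).
Definition codd c := crec CZero (csub (cconst 1) rec_val) CZero c.
Definition chalf c := crec CZero (cadd rec_val (codd rec_idx)) CZero c.
Definition cdivexp2 cv ci := crec CId (chalf rec_val) cv ci.

Lemma denote_add c1 c2 x : denote g (cadd c1 c2) x = denote g c1 x + denote g c2 x.
Proof.
rewrite /cadd denote_crec; elim: (denote g c2 x) => [|n IH]; first by rewrite addn0.
by rewrite prim_recS denote_comp denote_rec_val IH addnS.
Qed.

Lemma denote_pred c x : denote g (cpred c) x = (denote g c x).-1.
Proof.
by rewrite /cpred denote_crec; case: (denote g c x) => // n; rewrite prim_recS denote_rec_idx.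
Qed.

Lemma denote_sub c1 c2 x : denote g (csub c1 c2) x = denote g c1 x - denote g c2 x.
Proof.
rewrite /csub denote_crec; elim: (denote g c2 x) => [|n IH]; first by rewrite subn0.
by rewrite prim_recS denote_pred denote_rec_val IH subnS.
Qed.

Lemma denote_mul c1 c2 x : denote g (cmul c1 c2) x = denote g c1 x * denote g c2 x.
Proof.
rewrite /cmul denote_crec; elim: (denote g c2 x) => [|n IH]; first by rewrite muln0.
by rewrite prim_recS denote_add denote_rec_val denote_rec_arg IH mulnS addnC.
Qed.

Lemma denote_pow c1 c2 x : denote g (cpow c1 c2) x = denote g c1 x ^ denote g c2 x.
Proof.
rewrite /cpow denote_crec; elim: (denote g c2 x) => [|n IH]; first by rewrite expn0.
by rewrite prim_recS denote_mul denote_rec_val denote_rec_arg IH expnS mulnC.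
Qed.

Lemma denote_leq c1 c2 x : denote g (cleq c1 c2) x = (denote g c1 x <= denote g c2 x).
Proof.
by rewrite /cleq !denote_sub denote_const -subn_eq0; case: (denote g c1 x - _).
Qed.

Lemma denote_odd c x : denote g (codd c) x = odd (denote g c x).
Proof.
rewrite /codd denote_crec; elim: (denote g c x) => [|n IH] //.
by rewrite prim_recS denote_sub denote_rec_val denote_const IH /=; case: (odd n).
Qed.

Lemma denote_half c x : denote g (chalf c) x = (denote g c x)./2.
Proof.
rewrite /chalf denote_crec; elim: (denote g c x) => [|n IH] //.
by rewrite prim_recS denote_add denote_odd denote_rec_val denote_rec_idx IH /= uphalf_half addnC.
Qed.

Lemma denote_divexp2 cv ci x :
  denote g (cdivexp2 cv ci) x = denote g cv x %/ 2 ^ denote g ci x.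
Proof.
rewrite /cdivexp2 denote_crec; elim: (denote g ci x) => [|n IH]; first by rewrite divn1.
by rewrite prim_recS denote_half denote_rec_val IH -divn2 expnS mulnC divnMA.
Qed.

End Combinators.

(** * Blocks and bit strings *)

Fixpoint block_start (a n : nat) : nat :=
  if n is n'.+1 then block_start a n' + a ^ n' else 0.

Section Blocks.
Variables (a : nat) (a_gt0 : 0 < a).

Lemma leq_block_start {k l} : k <= l -> block_start a k <= block_start a l.
Proof.
move=> /subnKC <-; elim: (l - k) => [|d IH]; first by rewrite addn0.
by rewrite addnS /= (leq_trans IH) // leq_addr.
Qed.

Lemma block_start_ge n : n <= block_start a n.
Proof. by elim: n => //= n IH; rewrite -addn1 leq_add // expn_gt0 a_gt0. Qed.

Lemma block_startS_mul n : a * block_start a n + 1 = block_start a n.+1.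
Proof. by elim: n => [|n IH] /=; rewrite ?muln0 // mulnDr addnAC IH /= expnS. Qed.

End Blocks.

Fixpoint block_count (a m N : nat) : nat :=
  if N is N'.+1 then block_count a m N' + (block_start a N'.+1 <= m) else 0.

Definition block_index (a m : nat) : nat := block_count a m m.+1.

Lemma block_count_eq a m n N : 0 < a ->
  block_start a n <= m < block_start a n.+1 -> block_count a m N = minn N n.
Proof.
move=> a_gt0 /andP[lo hi]; elim: N => [|N IH] /=; first by rewrite min0n.
rewrite IH; case: (ltnP N n) => hN.
- by rewrite (leq_trans (leq_block_start a hN) lo) addn1 (minn_idPl hN).
- rewrite leqNgt (leq_trans hi (leq_block_start a (hN : n < N.+1))) //.
  by rewrite addn0 (minn_idPr (leqW hN)).
Qed.

Lemma block_index_eq a n i : 0 < a -> i < a ^ n ->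
  block_index a (block_start a n + i) = n.
Proof.
move=> a_gt0 hi; rewrite /block_index (@block_count_eq a _ n) //.
- by apply/minn_idPr/leqW/(leq_trans (block_start_ge a a_gt0 n)); rewrite leq_addr.
- by rewrite leq_addr /= ltn_add2l.
Qed.

Definition bit (v i : nat) : bool := odd (v %/ 2 ^ i).

Fixpoint pack (g : nat -> nat) (st L : nat) : nat :=
  if L is L'.+1 then pack g st L' + g (st + L') * 2 ^ L' else 0.

Section Pack.
Variables (g : nat -> nat) (g_bits : bitseq_fun g).

Lemma pack_lt st L : pack g st L < 2 ^ L.
Proof.
elim: L => [|L IH] //=; rewrite expnS mul2n -addnn.
have := g_bits (st + L); case: (g _) => [|[|//]] _.
- by rewrite mul0n addn0 ltn_addr.
- by rewrite mul1n ltn_add2r.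
Qed.

Lemma bit_pack st L i : i < L -> bit (pack g st L) i = g (st + i) :> nat.
Proof.
rewrite /bit; elim: L => [|L IH] // hi /=.
have e2 : 0 < 2 ^ i by rewrite expn_gt0.
case: (ltngtP i L) => [iL|iL|<-].
- have -> : 2 ^ L = 2 ^ (L - i) * 2 ^ i by rewrite -expnD subnK // ltnW.
  rewrite mulnA divnDr ?dvdn_mull // mulnK // oddD oddM oddX.
  by rewrite subn_eq0 leqNgt iL andbF addbF IH.
- by move: hi; rewrite ltnS leqNgt iL.
- rewrite addnC divnMDl // divn_small ?pack_lt // addn0.
  by have := g_bits (st + i); case: (g _) => [|[|//]].
Qed.

End Pack.

Definition pack_blocks (a : nat) (z : nat -> nat) (n : nat) : nat :=
  pack z (block_start a n) (a ^ n).

Definition unpack_compl (a : nat) (y : nat -> nat) (m : nat) : nat :=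
  let n := block_index a m in ~~ bit (y n) (m - block_start a n).

Lemma unpack_compl_bit a (y : nat -> nat) : bitseq_fun (unpack_compl a y).
Proof. by move=> m; rewrite /unpack_compl; case: (~~ _). Qed.

Lemma unpack_compl_pack_blocks a (z y : nat -> nat) n i :
  0 < a -> bitseq_fun z -> y n = pack_blocks a z n -> i < a ^ n ->
  unpack_compl a y (block_start a n + i) != z (block_start a n + i).
Proof.
move=> a_gt0 zbits yn hi; have := @bit_pack z zbits (block_start a n) _ _ hi.
rewrite /unpack_compl block_index_eq // addKn yn /pack_blocks.
by case: (bit _ _) => <-.
Qed.

Definition code_block_start a :=
  crec CZero (cadd rec_val (cpow (cconst a) rec_idx)) CZero CId.

Definition code_block_index a :=
  crec CZero (cadd rec_val (cleq (CComp (code_block_start a) (CComp CSucc rec_idx)) rec_arg))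
    CId (CComp CSucc CId).

Definition code_pack_blocks a :=
  crec CZero
    (cadd rec_val (cmul (CComp COracle (cadd (CComp (code_block_start a) rec_arg) rec_idx))
                        (cpow (cconst 2) rec_idx)))
    CId (cpow (cconst a) CId).

Definition code_unpack_compl a :=
  csub (cconst 1) (codd (cdivexp2 (CComp COracle (code_block_index a))
                                  (csub CId (CComp (code_block_start a) (code_block_index a))))).

Section Codes.
Variables (g : nat -> nat) (a : nat).

Lemma denote_block_start n : denote g (code_block_start a) n = block_start a n.
Proof.
rewrite /code_block_start denote_crec; elim: n => [|n IH] //.
by rewrite prim_recS denote_add denote_pow denote_rec_val denote_rec_idx denote_const IH.
Qed.

Lemma denote_block_index m : denote g (code_block_index a) m = block_index a m.
Proof.
rewrite /code_block_index /block_index denote_crec.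
rewrite [denote g (CComp CSucc CId) m]/= [denote g CId m]/=; elim: m.+1 => [|N IH] //.
rewrite prim_recS denote_add denote_leq (denote_comp g (code_block_start a)).
rewrite denote_block_start (denote_comp g CSucc).
by rewrite denote_rec_val denote_rec_idx denote_rec_arg IH.
Qed.

Lemma denote_pack_blocks n : denote g (code_pack_blocks a) n = pack_blocks a g n.
Proof.
rewrite /code_pack_blocks /pack_blocks denote_crec denote_pow denote_const.
elim: (a ^ n) => [|L IH] //.
rewrite prim_recS denote_add denote_mul denote_pow (denote_comp g COracle) denote_add.
rewrite (denote_comp g (code_block_start a)) denote_block_start.
by rewrite denote_rec_val denote_rec_arg denote_rec_idx denote_const IH.
Qed.

Lemma denote_unpack_compl m : denote g (code_unpack_compl a) m = unpack_compl a g m.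
Proof.
rewrite /code_unpack_compl /unpack_compl denote_sub denote_odd denote_divexp2 denote_sub.
rewrite denote_const (denote_comp g COracle) (denote_comp g (code_block_start a)).
rewrite denote_block_start denote_block_index /bit /=.
by case: odd.
Qed.

End Codes.

Ltac unfold_codes :=
  rewrite /code_pack_blocks /code_unpack_compl /code_block_index /code_block_start
    /cdivexp2 /chalf /codd /cleq /cpow /cmul /csub /cpred /cadd /crec
    /rec_arg /rec_idx /rec_val /= !mu_free_const.

Lemma mu_free_pack_blocks a : mu_free (code_pack_blocks a).
Proof. by unfold_codes. Qed.

Lemma mu_free_unpack_compl a : mu_free (code_unpack_compl a).
Proof. by unfold_codes. Qed.

(** * Lower density *)

Lemma lower_density_le (Z : nat -> bool) (p : Rdefinitions.R) :
  (forall N, exists2 n, N <= n & ((count Z (iota 0 n))%:R / n%:R <= p)%R) ->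
  (lower_density Z <= p%:E)%E.
Proof.
move=> H; rewrite /lower_density limn_einf_lim.
apply: lime_le; first exact: is_cvg_einfs.
apply: nearW => N; have [n Nn hn] := H N.
apply: (@le_trans _ _ ((count Z (iota 0 n))%:R / n%:R)%:E); last by rewrite lee_fin.
by apply: ereal_inf_lbound; exists n.
Qed.

Lemma count_iota_block_start (Z : nat -> bool) a n :
  (forall i, i < a ^ n -> ~~ Z (block_start a n + i)) ->
  count Z (iota 0 (block_start a n.+1)) <= block_start a n.
Proof.
move=> hZ; rewrite /= iotaD count_cat add0n.
have -> : count Z (iota (block_start a n) (a ^ n)) = 0.
  apply/eqP; rewrite -leqn0 leqNgt -has_count; apply/hasPn => j.
  rewrite mem_iota => /andP[lo hi].
  by rewrite -(subnKC lo) hZ // -(ltn_add2l (block_start a n)) subnKC.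
by rewrite addn0 (leq_trans (count_size _ _)) // size_iota.
Qed.

Lemma lower_density_blocks (Z : nat -> bool) a : 0 < a ->
  (forall N, exists2 n, N <= n & forall i, i < a ^ n -> ~~ Z (block_start a n + i)) ->
  (lower_density Z <= (1 / a%:R)%R%:E)%E.
Proof.
move=> a_gt0 H; apply: lower_density_le => N; have [n Nn hn] := H N.
have Sn1_gt0 : 0 < block_start a n.+1 := leq_trans (ltn0Sn n) (block_start_ge a a_gt0 _).
exists (block_start a n.+1); first exact: leq_trans (leqW Nn) (block_start_ge a a_gt0 _).
rewrite ler_pdivrMr ?ltr0n // mul1r mulrC ler_pdivlMr ?ltr0n // -natrM ler_nat.
apply: (@leq_trans (block_start a n * a)); last by rewrite -block_startS_mul mulnC leq_addr.
by rewrite leq_mul2r count_iota_block_start ?orbT.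
Qed.

(** * The two reductions *)

Section Reductions.
Variables (a : nat) (a_gt0 : 0 < a).
Let h n := 2 ^ (a ^ n).

Lemma pack_blocks_lt z : bitseq_fun z -> forall n, pack_blocks a z n < h n.
Proof. by move=> zbits n; apply: pack_lt. Qed.

Lemma IOE_ge_massD : strong_le (massD (1 / a%:R)%R) (IOE h).
Proof.
apply: (strong_le_denote (mu_free_unpack_compl a)) => y hy.
split=> [|x cx xbits]; first by move=> m; rewrite denote_unpack_compl unpack_compl_bit.
have cx' := computable_denote cx (mu_free_pack_blocks a).
have x'_lt n : denote x (code_pack_blocks a) n < h n.
  by rewrite denote_pack_blocks pack_blocks_lt.
apply: lower_density_blocks => // N; have [n [Nn xy]] := hy _ cx' x'_lt N.
exists n => // i hi; rewrite /agree denote_unpack_compl eq_sym.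
by rewrite unpack_compl_pack_blocks // -xy denote_pack_blocks.
Qed.

Lemma AED_le_massB : strong_le (AED h) (massB (1 / a%:R)%R).
Proof.
apply: (strong_le_denote (mu_free_pack_blocks a)) => z [zbits hz].
split=> [n|x cx]; first by rewrite denote_pack_blocks pack_blocks_lt.
have cw := computable_denote cx (mu_free_unpack_compl a).
have wbits : bitseq_fun (denote x (code_unpack_compl a)).
  by move=> m; rewrite denote_unpack_compl unpack_compl_bit.
apply: contrapT => not_ae; have := hz _ cw wbits; apply/negP; rewrite -leNgt.
apply: lower_density_blocks => // N.
have [n [Nn xz]] : exists n, N <= n /\ x n = denote z (code_pack_blocks a) n.
  by apply: contrapT => no_n; apply: not_ae; exists N => n Nn xz; apply: no_n; exists n.
exists n => // i hi; rewrite /agree denote_unpack_compl.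
by rewrite unpack_compl_pack_blocks // xz denote_pack_blocks.
Qed.

End Reductions.

Theorem mainTheorem5 (a : nat) (ha : (0 < a)%N) :
  let h := fun n : nat => (2 ^ (a ^ n))%N in
  strong_le (massD (1 / a%:R)%R) (IOE h) /\
  strong_le (AED h) (massB (1 / a%:R)%R).
Proof. by split; [exact: IOE_ge_massD | exact: AED_le_massB]. Qed.
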